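(* Assume $\mathrm{recc}(C)\subseteq\mathrm{recc}(P^B)$. Fix $k\in N_2$ and assume $N_0\not\subseteq J$. Let $(i,j)\in M'\times(N\setminus J)$ and $\gamma\in[0,\gamma'_{ij})$. Then $\bar r^i+\gamma\bar r^j\in\mathrm{recc}(S_k^C)$.
   Context: Let $A\in\mathbb{R}^{m\times n}$ have full row rank, $b\in\mathbb{R}^m$, and $P=\{x\in\mathbb{R}^n_+:Ax=b\}$. Let $C\subseteq\mathbb{R}^n$ be an open convex set. Fix a basis $B$ of $P$ with nonbasic set $N=\{1,\dots,n\}\setminus B$. Write $P=\{x:x_i=\bar b_i-\sum_{j\in N}\bar a_{ij}x_j\ (i\in B),\ x\ge0\}$ with $\bar b\ge0$. The basic solution $\bar x$ has $\bar x_i=\bar b_i$ ($i\in B$) and $0$ ($i\in N$). $P^B$ is obtained by dropping $x_i\ge0$ for $i\in B$. For $j\in N$, $\bar r^j$ has $\bar r^j_k=-\bar a_{kj}$ ($k\in B$), $\bar r^j_j=1$, and $0$ otherwise. Thus $P^B=\{\bar x+\sum_{j\in N}x_j\bar r^j:x_j\ge0\}$. It is assumed that $\bar x\notin\mathrm{cl}(C)$. For $j\in N$, $\alpha_j=\inf\{\lambda\ge0:\bar x+\lambda\bar r^j\in C\}$ and $\beta_j=\sup\{\lambda\ge0:\bar x+\lambda\bar r^j\in C\}$, with $\alpha_j=+\infty$, $\beta_j=-\infty$ if the halfline misses $C$. Define - $N_0=\{j:\alpha_j=+\infty,\beta_j=-\infty\}$; - $N_2=\{j:\alpha_j\in(0,\infty),\beta_j\in(\alpha_j,\infty)\}$.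 For a set $K$, $\mathrm{recc}(K)=\{d:x+\lambda d\in K\ \forall x\in K,\lambda\ge0\}$. For $k\in N_2$, $S_k^C=\{\bar x\}+\mathrm{conv}\big(\bigcup_{j\in N_2}\{\lambda\bar r^j:0\le\lambda<\beta_j\}\big)+\{\lambda\bar r^k:\lambda\le0\}+\mathrm{recc}(C)$. Let $J=\{i\in N:\bar r^i\in\mathrm{recc}(S_k^C)\}$. For $i\in J$, $j\in N\setminus J$, $\gamma'_{ij}=\sup\{\gamma\ge0:\bar r^i+\gamma\bar r^j\in\mathrm{recc}(S_k^C)\}$ (possibly $+\infty$). Let $M'=\{i\in J:\gamma'_{ij}>0\ \forall j\in N\setminus J\}$. *)

From HB Require Import structures.
From mathcomp Require Import all_boot all_order all_algebra.
From mathcomp Require Import all_classical all_reals all_analysis.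
Set Implicit Arguments. Unset Strict Implicit. Unset Printing Implicit Defensive.
Import Order.TTheory GRing.Theory Num.Theory.
Import numFieldNormedType.Exports.
Local Open Scope classical_set_scope.
Local Open Scope ring_scope.

Section Defs.
Variable R : realType.
Variable n : nat.
Local Notation V := 'cV[R]_n.

Definition recc (K : set V) : set V :=
  [set d | forall x, K x -> forall l : R, 0 <= l -> K (x + l *: d)].

Definition msum (K L : set V) : set V :=
  [set z | exists x y, K x /\ L y /\ z = x + y].

Definition conv (S : set V) : set V :=
  [set x | exists (p : nat) (w : 'I_p -> R) (y : 'I_p -> V),
     (forall i, 0 <= w i) /\ \sum_(i < p) w i = 1 /\
     (forall i, S (y i)) /\ x = \sum_(i < p) w i *: y i].

Definition is_basis (m : nat) (A : 'M[R]_(m, n)) (B : {set 'I_n}) : Prop :=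
  #|B| = m /\
  forall y : V, (forall j, j \notin B -> y j 0 = 0) -> A *m y = 0 -> y = 0.

Definition basic_solution (m : nat) (A : 'M[R]_(m, n)) (b : 'cV[R]_m)
    (B : {set 'I_n}) (xbar : V) : Prop :=
  A *m xbar = b /\ forall j, j \notin B -> xbar j 0 = 0.

(* r^j (j in N): r^j_j = 1, r^j_l = 0 for l in N \ {j}, and r^j_B = - abar_{.j},
   i.e. A r^j = 0 (this is x_B = bbar - sum abar x_N along the j-th edge). *)
Definition basic_ray (m : nat) (A : 'M[R]_(m, n)) (B : {set 'I_n})
    (j : 'I_n) (r : V) : Prop :=
  A *m r = 0 /\ r j 0 = 1 /\ forall l, l \notin B -> l != j -> r l 0 = 0.

Definition PB (B : {set 'I_n}) (xbar : V) (rbar : 'I_n -> V) : set V :=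
  [set x | exists t : 'I_n -> R, (forall j, 0 <= t j) /\
     x = xbar + \sum_(j < n | j \notin B) t j *: rbar j].

Definition lam_set (C : set V) (xbar d : V) : set R :=
  [set l | 0 <= l /\ C (xbar + l *: d)].

(* alpha_j = inf, beta_j = sup (in the extended reals; inf of empty = +oo,
   sup of empty = -oo) *)
Definition alpha (C : set V) (xbar d : V) : \bar R :=
  ereal_inf [set l%:E | l in lam_set C xbar d].
Definition beta (C : set V) (xbar d : V) : \bar R :=
  ereal_sup [set l%:E | l in lam_set C xbar d].

Definition N0 (B : {set 'I_n}) (C : set V) (xbar : V) (rbar : 'I_n -> V) : set 'I_n :=
  [set j | j \notin B /\ alpha C xbar (rbar j) = +oo%E /\ beta C xbar (rbar j) = -oo%E].

Definition N2 (B : {set 'I_n}) (C : set V) (xbar : V) (rbar : 'I_n -> V) : set 'I_n :=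
  [set j | j \notin B /\
     (0 < alpha C xbar (rbar j))%E /\ (alpha C xbar (rbar j) < +oo)%E /\
     (alpha C xbar (rbar j) < beta C xbar (rbar j))%E /\
     (beta C xbar (rbar j) < +oo)%E].

Definition SkC (B : {set 'I_n}) (C : set V) (xbar : V) (rbar : 'I_n -> V)
    (k : 'I_n) : set V :=
  msum (msum (msum [set xbar]
    (conv [set z | exists j l, N2 B C xbar rbar j /\ 0 <= l /\
                    (l%:E < beta C xbar (rbar j))%E /\ z = l *: rbar j]))
    [set z | exists l : R, l <= 0 /\ z = l *: rbar k])
    (recc C).

Definition Jset (B : {set 'I_n}) (C : set V) (xbar : V) (rbar : 'I_n -> V)
    (k : 'I_n) : set 'I_n :=
  [set i | i \notin B /\ recc (SkC B C xbar rbar k) (rbar i)].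

Definition gamma' (B : {set 'I_n}) (C : set V) (xbar : V) (rbar : 'I_n -> V)
    (k i j : 'I_n) : \bar R :=
  ereal_sup [set g%:E | g in [set g : R | 0 <= g /\
     recc (SkC B C xbar rbar k) (rbar i + g *: rbar j)]].

Definition Mset (B : {set 'I_n}) (C : set V) (xbar : V) (rbar : 'I_n -> V)
    (k : 'I_n) : set 'I_n :=
  [set i | Jset B C xbar rbar k i /\
     forall j, j \notin B -> ~ Jset B C xbar rbar k j ->
       (0 < gamma' B C xbar rbar k i j)%E].

End Defs.

From HB Require Import structures.
From mathcomp Require Import all_boot all_order all_algebra.
From mathcomp Require Import all_classical all_reals all_analysis.
Import Order.TTheory GRing.Theory Num.Theory.
Import numFieldNormedType.Exports.
Local Open Scope classical_set_scope.
Local Open Scope ring_scope.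

(* The recession cone of any set is a convex cone.  Since r^i and
   r^i + g' r^j lie in recc(S_k^C) for some g' > g (by i in J and the
   definition of gamma'_ij as a supremum), so does the point
   r^i + g r^j of the segment between them. *)

Section RecessionCone.
Variables (R : realType) (n : nat) (K : set 'cV[R]_n).

Lemma recc_add (d1 d2 : 'cV[R]_n) :
  recc K d1 -> recc K d2 -> recc K (d1 + d2).
Proof.
move=> rec1 rec2 x Kx l l_ge0; rewrite scalerDr addrA.
exact: rec2 (rec1 x Kx l l_ge0) l l_ge0.
Qed.

Lemma recc_scale (c : R) (d : 'cV[R]_n) :
  0 <= c -> recc K d -> recc K (c *: d).
Proof.
move=> c_ge0 recd x Kx l l_ge0; rewrite scalerA.
by apply: recd => //; rewrite mulr_ge0.
Qed.

Lemma recc_segment (u v : 'cV[R]_n) (g g' : R) :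
  0 <= g <= g' -> recc K u -> recc K (u + g' *: v) -> recc K (u + g *: v).
Proof.
case/andP=> g_ge0 le_gg' recu recuv.
have [g'0 | g'_neq0] := eqVneq g' 0.
  have -> : g = 0 by apply/eqP; rewrite eq_le g_ge0 -g'0 le_gg'.
  by rewrite scale0r addr0.
have convex_comb : u + g *: v = (g / g') *: (u + g' *: v) + (1 - g / g') *: u.
  rewrite scalerDr scalerA mulfVK // scalerBl scale1r.
  by rewrite [RHS]addrC addrA subrK.
have g'_gt0 : 0 < g' by rewrite lt_def g'_neq0 (le_trans g_ge0).
rewrite convex_comb; apply: recc_add; apply: recc_scale => //.
  by rewrite divr_ge0 // ltW.
by rewrite subr_ge0 ler_pdivrMr // mul1r.
Qed.

End RecessionCone.

Lemma lt_ereal_sup_image (R : realType) (S : set R) (x : R) :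
  (x%:E < ereal_sup [set y%:E | y in S])%E -> exists2 y, S y & x < y.
Proof.
by case/ereal_sup_gt=> _ [y Sy <-]; rewrite lte_fin; exists y.
Qed.

Theorem proposition8 (R : realType) (m n : nat)
  (A : 'M[R]_(m, n)) (b : 'cV[R]_m) (C : set 'cV[R]_n)
  (B : {set 'I_n}) (xbar : 'cV[R]_n) (rbar : 'I_n -> 'cV[R]_n) :
  \rank A = m ->
  is_basis A B ->
  basic_solution A b B xbar ->
  (forall i, 0 <= xbar i 0) ->
  (forall j, j \notin B -> basic_ray A B j (rbar j)) ->
  open C ->
  convex_set (C : set (convex_lmodType 'cV[R]_n)) ->
  ~ closure C xbar ->
  recc C `<=` recc (PB B xbar rbar) ->
  forall k : 'I_n, N2 B C xbar rbar k ->
  ~ (N0 B C xbar rbar `<=` Jset B C xbar rbar k) ->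
  forall i j : 'I_n,
    Mset B C xbar rbar k i -> j \notin B -> ~ Jset B C xbar rbar k j ->
  forall g : R, 0 <= g -> (g%:E < gamma' B C xbar rbar k i j)%E ->
  recc (SkC B C xbar rbar k) (rbar i + g *: rbar j).
Proof.
move=> _ _ _ _ _ _ _ _ _ k _ _ i j [[_ rec_ri] _] _ _ g g_ge0.
case/lt_ereal_sup_image=> g' [_ rec_ri_g'rj] lt_gg'.
by apply: recc_segment rec_ri rec_ri_g'rj; rewrite g_ge0 ltW.
Qed.
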